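(* Let $U\le B$ be positive integers, $P>0$, $\mathbf{H}\in\mathbb{C}^{U\times B}$, and $\mathbf{s}\in\mathbb{C}^U$ with $\mathbf{s}\neq\mathbf{0}$. Set $$\mathbf{Q}=\mathbf{I}_U-\frac{\mathbf{s}\mathbf{s}^H}{\|\mathbf{s}\|_2^2},\qquad \mathbf{A}=\mathbf{Q}\mathbf{H}\in\mathbb{C}^{U\times B},$$ let $\ell=\sqrt{P/(2B)}$ and $$\mathcal{B}^B=\{\mathbf{c}\in\mathbb{C}^B:\ |\mathrm{Re}\{c_b\}|\le \ell,\ |\mathrm{Im}\{c_b\}|\le \ell,\ b=1,\dots,B\}.$$ Let $\delta>0$ and a step size $\tau>0$ satisfy $\tau<\|\mathbf{A}^H\mathbf{A}\|_{2,2}^{-1}$ and $\tau\delta<1$. Consider the objective $$F(\mathbf{x})=\tfrac12\|\mathbf{A}\mathbf{x}\|_2^2-\tfrac{\delta}{2}\|\mathbf{x}\|_2^2+\chi(\mathbf{x}\in\mathcal{B}^B),$$ i.e. the problem $\min_{\mathbf{x}\in\mathcal{B}^B}\tfrac12\|\mathbf{A}\mathbf{x}\|_2^2-\tfrac{\delta}{2}\|\mathbf{x}\|_2^2$. Define the sequence (algorithm C2PO) by $\mathbf{x}^{(1)}=\mathbf{H}^H\mathbf{s}$ and, for $t=1,2,\dots$, $$\mathbf{z}^{(t+1)}=\mathbf{x}^{(t)}-\tau\mathbf{A}^H\mathbf{A}\mathbf{x}^{(t)},\qquad \mathbf{x}^{(t+1)}=\mathrm{prox}_g(\mathbf{z}^{(t+1)};\tau),$$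 where $\mathrm{prox}_g$ acts entrywise as $$\mathrm{prox}_g(z)=\mathrm{sgn}(\mathrm{Re}\{z\})\min\Big\{\tfrac{1}{1-\tau\delta}|\mathrm{Re}\{z\}|,\ \ell\Big\}+j\,\mathrm{sgn}(\mathrm{Im}\{z\})\min\Big\{\tfrac{1}{1-\tau\delta}|\mathrm{Im}\{z\}|,\ \ell\Big\}.$$ Then C2PO decreases the objective monotonically, i.e. $F(\mathbf{x}^{(t+1)})\le F(\mathbf{x}^{(t)})$ for all $t$, and any limit point of the iterates $\{\mathbf{x}^{(t)}\}$ is a stationary point of this problem.
   Context: $\chi(\mathbf{x}\in\mathcal{B}^B)$ equals $0$ if $\mathbf{x}\in\mathcal{B}^B$ and $+\infty$ otherwise. $\|\cdot\|_{2,2}$ is the spectral (matrix $\ell_2$) norm. $\mathrm{sgn}(a)=+1$ for $a\ge0$ and $-1$ for $a<0$; $j$ is the imaginary unit. Complex vectors are identified with real vectors of twice the dimension, with real inner product $\mathrm{Re}\{\mathbf{u}^H\mathbf{v}\}$. Writing $f(\mathbf{x})=\tfrac12\|\mathbf{A}\mathbf{x}\|_2^2$ and $g(\mathbf{x})=\chi(\mathbf{x}\in\mathcal{B}^B)-\tfrac{\delta}{2}\|\mathbf{x}\|_2^2$, a stationary point is a point $\mathbf{x}^\star\in\mathcal{B}^B$ with $0\in\partial g(\mathbf{x}^\star)+\nabla f(\mathbf{x}^\star)$, equivalently $-(\mathbf{A}^H\mathbf{A}\mathbf{x}^\star-\delta\mathbf{x}^\star)$ lies in the normal cone of $\mathcal{B}^B$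 at $\mathbf{x}^\star$. *)

From HB Require Import structures.
From mathcomp Require Import all_boot all_order all_algebra.
From mathcomp Require Import complex.
From mathcomp Require Import boolp classical_sets reals constructive_ereal.
Set Implicit Arguments. Unset Strict Implicit. Unset Printing Implicit Defensive.
Import Order.TTheory GRing.Theory Num.Theory.
Local Open Scope ring_scope.
Local Open Scope complex_scope.
Local Open Scope classical_set_scope.

Section C2PO.
Variable R : realType.
Local Notation C := (R[i]).

Definition adjmx m n (M : 'M[C]_(m, n)) : 'M[C]_(n, m) :=
  \matrix_(i, j) conjc (M j i).

Definition cnorm2 n (v : 'cV[C]_n) : R :=
  \sum_(i < n) ((complex.Re (v i 0)) ^+ 2 + (complex.Im (v i 0)) ^+ 2).

(* real inner product Re{u^H v} *)
Definition rdot n (u v : 'cV[C]_n) : R :=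
  \sum_(i < n) (complex.Re (u i 0) * complex.Re (v i 0) + complex.Im (u i 0) * complex.Im (v i 0)).

Definition specnorm m n (M : 'M[C]_(m, n)) : R :=
  sup [set r : R | exists v : 'cV[C]_n,
                     cnorm2 v <= 1 /\ r = Num.sqrt (cnorm2 (M *m v))].

Definition inbox n (l : R) (x : 'cV[C]_n) : Prop :=
  forall i : 'I_n, `|complex.Re (x i 0)| <= l /\ `|complex.Im (x i 0)| <= l.

Definition sgn (a : R) : R := if 0 <= a then 1 else -1.

Definition prox_entry (tau delta l : R) (z : C) : C :=
  Complex (sgn (complex.Re z) * Num.min ((1 - tau * delta)^-1 * `|complex.Re z|) l)
          (sgn (complex.Im z) * Num.min ((1 - tau * delta)^-1 * `|complex.Im z|) l).

Definition prox n (tau delta l : R) (z : 'cV[C]_n) : 'cV[C]_n :=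
  \col_i prox_entry tau delta l (z i 0).

Definition objF m n (A : 'M[C]_(m, n)) (delta l : R) (x : 'cV[C]_n) : \bar R :=
  if asbool (inbox l x)
  then ((cnorm2 (A *m x)) / 2 - delta / 2 * cnorm2 x)%:E
  else (+oo)%E.

Definition normal_cone n (l : R) (x v : 'cV[C]_n) : Prop :=
  forall y : 'cV[C]_n, inbox l y -> rdot v (y - x) <= 0.

Definition stationary m n (A : 'M[C]_(m, n)) (delta l : R) (x : 'cV[C]_n) : Prop :=
  inbox l x /\
  normal_cone l x (- (adjmx A *m A *m x - delta%:C *: x)).

Definition limit_point n (x : nat -> 'cV[C]_n) (p : 'cV[C]_n) : Prop :=
  forall eps : R, 0 < eps -> forall N : nat,
    exists t : nat, (N <= t)%N /\ cnorm2 (x t - p) < eps.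

End C2PO.

From HB Require Import structures.
From mathcomp Require Import all_boot all_order all_algebra.
From mathcomp Require Import complex.
From mathcomp Require Import boolp classical_sets reals constructive_ereal.
From mathcomp Require Import ring lra.
Import Order.TTheory GRing.Theory Num.Theory.
Set Implicit Arguments. Unset Strict Implicit.
Local Open Scope ring_scope.
Local Open Scope complex_scope.

(* The C2PO iterate x' = prox(x - tau A^H A x) is characterised by the variational
   inequality Re<(1 - tau delta) x' - (x - tau A^H A x), y - x'> >= 0 for every y in
   the box.  Choosing y = x and bounding ||A d||^2 <= ||A^H A|| ||d||^2 gives the
   sufficient decrease 2 tau (f(x) - f(x')) >= (1 - tau ||A^H A||) ||x' - x||^2 for
   the smooth part f of F.  As f is bounded below on the box, the steps x' - x tend
   to 0; hence near a limit point p both x^(t) and x^(t+1) are close to p, and the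
   variational inequality passes to the limit, where it reads
   tau Re<A^H A p - delta p, y - p> >= 0, i.e. stationarity of p. *)

(* [Num.Theory] also exports a [Re] on number fields. *)
Local Notation Re := complex.Re.
Local Notation Im := complex.Im.

Lemma discr_le0 (R : realFieldType) (p r q : R) : 0 <= p ->
  (forall a, 0 <= a ^+ 2 * p - 2 * a * r + q) -> r ^+ 2 <= p * q.
Proof.
move=> p_ge0 quad_ge0; have [p0|p_neq0] := eqVneq p 0.
  have [->|r_neq0] := eqVneq r 0; first by rewrite expr0n p0 mul0r.
  have := quad_ge0 ((q + 1) / (2 * r)).
  have -> : 2 * ((q + 1) / (2 * r)) * r = q + 1 by field; rewrite r_neq0.
  rewrite p0 mulr0; lra.
have p_gt0 : 0 < p by rewrite lt_neqAle eq_sym p_neq0.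
have := quad_ge0 (r / p).
have -> : (r / p) ^+ 2 * p - 2 * (r / p) * r + q = q - r ^+ 2 / p.
  by field; rewrite p_neq0.
by rewrite subr_ge0 ler_pdivrMr // mulrC.
Qed.

Lemma ge0_of_ge_small (R : realFieldType) (X K : R) : 0 <= K ->
  (forall e, 0 < e <= 1 -> - (e * K) <= X) -> 0 <= X.
Proof.
move=> K_ge0 small; rewrite leNgt; apply/negP => X_lt0.
set e := - X / (K - X).
have e_gt0 : 0 < e by rewrite divr_gt0 //; lra.
have eKX : e * (K - X) = - X by rewrite divfK //; lra.
have e_le1 : e <= 1 by nra.
have := small e; rewrite e_gt0 e_le1 => /(_ isT); nra.
Qed.

Lemma sufficient_decrease_eventually_lt (R : archiRealFieldType) (G D : nat -> R) (k LB : R) :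
  0 < k -> (forall t, 0 <= D t) -> (forall t, k * D t <= G t - G t.+1) ->
  (forall t, LB <= G t) ->
  forall e, 0 < e -> exists N, forall t, (N <= t)%N -> D t < e.
Proof.
move=> k_gt0 D_ge0 decr G_ge e e_gt0.
have G_nonincr s t : (s <= t)%N -> G t <= G s.
  elim: t => [|t IH]; first by rewrite leqn0 => /eqP ->.
  rewrite leq_eqVlt ltnS => /orP[/eqP -> //|/IH G_le].
  by have := decr t; have := mulr_ge0 (ltW k_gt0) (D_ge0 t); lra.
apply: contrapT => not_eventually.
have often N : exists2 t, (N <= t)%N & e <= D t.
  apply: contrapT => never; apply: not_eventually; exists N => t N_le_t.
  by rewrite ltNge; apply/negP => e_le; apply: never; exists t.
have drop j : exists T, j%:R * (k * e) <= G 0%N - G T.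
  elim: j => [|j [T drop_T]]; first by exists 0%N; rewrite mul0r subrr.
  have [t T_le_t e_le] := often T; exists t.+1.
  have := G_nonincr _ _ T_le_t; have := decr t; have := ler_wpM2l (ltW k_gt0) e_le.
  by rewrite -natr1 mulrDl mul1r; lra.
have gap_ge0 : 0 <= (G 0%N - LB) / (k * e).
  by rewrite divr_ge0 ?subr_ge0 // mulr_ge0 // ltW.
have [T drop_T] := drop (Num.Def.archi_bound ((G 0%N - LB) / (k * e))).
have := archi_boundP gap_ge0; rewrite ltr_pdivrMr ?mulr_gt0 //.
by have := G_ge T; lra.
Qed.

Section RealInnerProduct.
Variable R : realType.
Local Notation C := R[i].

Lemma ReD (z w : C) : Re (z + w) = Re z + Re w. Proof. by case: z; case: w. Qed.
Lemma ImD (z w : C) : Im (z + w) = Im z + Im w. Proof. by case: z; case: w. Qed.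
Lemma ReN (z : C) : Re (- z) = - Re z. Proof. by case: z. Qed.
Lemma ImN (z : C) : Im (- z) = - Im z. Proof. by case: z. Qed.
Lemma ReM (z w : C) : Re (z * w) = Re z * Re w - Im z * Im w.
Proof. by case: z; case: w. Qed.
Lemma ImM (z w : C) : Im (z * w) = Re z * Im w + Im z * Re w.
Proof. by case: z => a b; case: w. Qed.
Lemma ReJ (z : C) : Re z^* = Re z. Proof. by case: z. Qed.
Lemma ImJ (z : C) : Im z^* = - Im z. Proof. by case: z. Qed.
Lemma Re_sum n (F : 'I_n -> C) : Re (\sum_(i < n) F i) = \sum_(i < n) Re (F i).
Proof. exact: (big_morph _ ReD (erefl : Re (0 : C) = 0)). Qed.
Lemma Im_sum n (F : 'I_n -> C) : Im (\sum_(i < n) F i) = \sum_(i < n) Im (F i).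
Proof. exact: (big_morph _ ImD (erefl : Im (0 : C) = 0)). Qed.

Definition ReImE := (ReD, ImD, ReN, ImN, ReM, ImM, ReJ, ImJ).

Implicit Types c : R.

Lemma rdotC n (u v : 'cV[C]_n) : rdot u v = rdot v u.
Proof. by apply: eq_bigr => i _; ring. Qed.
Lemma rdotDl n (u v w : 'cV[C]_n) : rdot (u + v) w = rdot u w + rdot v w.
Proof. by rewrite -big_split; apply: eq_bigr => i _ /=; rewrite !mxE !ReImE; ring. Qed.
Lemma rdotNl n (u w : 'cV[C]_n) : rdot (- u) w = - rdot u w.
Proof. by rewrite -sumrN; apply: eq_bigr => i _ /=; rewrite !mxE !ReImE; ring. Qed.
Lemma rdotZl n c (u w : 'cV[C]_n) : rdot (c%:C *: u) w = c * rdot u w.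
Proof. by rewrite mulr_sumr; apply: eq_bigr => i _ /=; rewrite !mxE !ReImE /=; ring. Qed.
Lemma rdotBl n (u v w : 'cV[C]_n) : rdot (u - v) w = rdot u w - rdot v w.
Proof. by rewrite rdotDl rdotNl. Qed.
Lemma rdotDr n (u v w : 'cV[C]_n) : rdot w (u + v) = rdot w u + rdot w v.
Proof. by rewrite rdotC rdotDl !(rdotC w). Qed.
Lemma rdotNr n (u w : 'cV[C]_n) : rdot w (- u) = - rdot w u.
Proof. by rewrite rdotC rdotNl rdotC. Qed.
Lemma rdotZr n c (u w : 'cV[C]_n) : rdot w (c%:C *: u) = c * rdot w u.
Proof. by rewrite rdotC rdotZl rdotC. Qed.
Lemma rdotBr n (u v w : 'cV[C]_n) : rdot w (u - v) = rdot w u - rdot w v.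
Proof. by rewrite rdotDr rdotNr. Qed.
Lemma rdotvv n (v : 'cV[C]_n) : rdot v v = cnorm2 v.
Proof. by apply: eq_bigr => i _; rewrite !expr2. Qed.

Lemma rdot_adjmx m n (A : 'M[C]_(m, n)) u w :
  rdot (A *m u) w = rdot u (adjmx A *m w).
Proof.
rewrite /rdot; under eq_bigr => i _ do rewrite !mxE Re_sum Im_sum !mulr_suml -big_split /=.
rewrite exchange_big; apply: eq_bigr => j _ /=.
rewrite !mxE Re_sum Im_sum !mulr_sumr -big_split; apply: eq_bigr => i _ /=.
by rewrite !mxE !ReImE; ring.
Qed.

Lemma cnorm2_ge0 n (v : 'cV[C]_n) : 0 <= cnorm2 v.
Proof. by apply: sumr_ge0 => i _; rewrite addr_ge0 ?sqr_ge0. Qed.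
Lemma cnorm2Z n c (v : 'cV[C]_n) : cnorm2 (c%:C *: v) = c ^+ 2 * cnorm2 v.
Proof. by rewrite -!rdotvv rdotZl rdotZr mulrA expr2. Qed.
Lemma cnorm2N n (v : 'cV[C]_n) : cnorm2 (- v) = cnorm2 v.
Proof. by rewrite -!rdotvv rdotNl rdotNr opprK. Qed.
Lemma cnorm2D n (u v : 'cV[C]_n) :
  cnorm2 (u + v) = cnorm2 u + 2 * rdot u v + cnorm2 v.
Proof. by rewrite -!rdotvv rdotDl !rdotDr (rdotC v u); ring. Qed.

Lemma rdot_sqr_le n (u v : 'cV[C]_n) : rdot u v ^+ 2 <= cnorm2 u * cnorm2 v.
Proof.
apply: discr_le0; first exact: cnorm2_ge0.
move=> a; have := cnorm2_ge0 (a%:C *: u - v).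
by rewrite cnorm2D cnorm2N cnorm2Z rdotNr rdotZl; lra.
Qed.

Lemma cnorm2_entry_le n (v : 'cV[C]_n) i :
  Re (v i 0) ^+ 2 + Im (v i 0) ^+ 2 <= cnorm2 v.
Proof.
rewrite /cnorm2 (bigD1 i) //= lerDl.
by apply: sumr_ge0 => j _; rewrite addr_ge0 ?sqr_ge0.
Qed.

Lemma inbox_cnorm2_le n l (v : 'cV[C]_n) :
  inbox l v -> cnorm2 v <= n%:R * (2 * l ^+ 2).
Proof.
move=> v_box; have -> : n%:R * (2 * l ^+ 2) = \sum_(i < n) (2 * l ^+ 2).
  by rewrite sumr_const card_ord mulr_natl.
apply: ler_sum => i _.
have sqr_le a : `|a| <= l -> a ^+ 2 <= l ^+ 2.
  by rewrite -real_normK ?num_real // => a_le; rewrite lerXn2r ?nnegrE // (le_trans _ a_le).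
have [/sqr_le Re_le /sqr_le Im_le] := v_box i; lra.
Qed.

End RealInnerProduct.

Section EuclideanNorm.
Variable R : realType.
Local Notation C := R[i].
Implicit Types c : R.

Definition cnorm n (v : 'cV[C]_n) : R := Num.sqrt (cnorm2 v).

Lemma cnorm_ge0 n (v : 'cV[C]_n) : 0 <= cnorm v.
Proof. exact: sqrtr_ge0. Qed.

Lemma sqr_cnorm n (v : 'cV[C]_n) : cnorm v ^+ 2 = cnorm2 v.
Proof. by rewrite sqr_sqrtr // cnorm2_ge0. Qed.

Lemma cnorm_le n (v : 'cV[C]_n) X : 0 <= X -> cnorm2 v <= X ^+ 2 -> cnorm v <= X.
Proof. by move=> X_ge0 v_le; rewrite -(ger0_norm X_ge0) -sqrtr_sqr ler_sqrt ?sqr_ge0. Qed.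

Lemma normr_rdot_le n (u v : 'cV[C]_n) : `|rdot u v| <= cnorm u * cnorm v.
Proof.
rewrite -sqrtrM ?cnorm2_ge0 // -sqrtr_sqr ler_sqrt ?rdot_sqr_le //.
by rewrite mulr_ge0 ?cnorm2_ge0.
Qed.

Lemma rdot_le n (u v : 'cV[C]_n) : rdot u v <= cnorm u * cnorm v.
Proof. exact: le_trans (ler_norm _) (normr_rdot_le u v). Qed.

Lemma cnormN n (v : 'cV[C]_n) : cnorm (- v) = cnorm v.
Proof. by rewrite /cnorm cnorm2N. Qed.

Lemma cnormBC n (u v : 'cV[C]_n) : cnorm (u - v) = cnorm (v - u).
Proof. by rewrite -cnormN opprB. Qed.

Lemma cnormZ n c (v : 'cV[C]_n) : cnorm (c%:C *: v) = `|c| * cnorm v.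
Proof. by rewrite /cnorm cnorm2Z sqrtrM ?sqr_ge0 // sqrtr_sqr. Qed.

Lemma cnormD n (u v : 'cV[C]_n) : cnorm (u + v) <= cnorm u + cnorm v.
Proof.
apply: cnorm_le; first by rewrite addr_ge0 ?cnorm_ge0.
by rewrite cnorm2D -!sqr_cnorm; have := rdot_le u v; lra.
Qed.

Lemma cnormB n (u v : 'cV[C]_n) : cnorm (u - v) <= cnorm u + cnorm v.
Proof. by rewrite -(cnormN v) cnormD. Qed.

Lemma entry_le_cnorm n (v : 'cV[C]_n) i :
  `|Re (v i 0)| <= cnorm v /\ `|Im (v i 0)| <= cnorm v.
Proof.
have := cnorm2_entry_le v i; have := sqr_ge0 (Re (v i 0)); have := sqr_ge0 (Im (v i 0)).
by split; rewrite -sqrtr_sqr ler_sqrt ?cnorm2_ge0 //; lra.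
Qed.

Lemma inbox_closed n l (p : 'cV[C]_n) :
  (forall e, 0 < e -> exists2 v, inbox l v & cnorm (v - p) <= e) -> inbox l p.
Proof.
move=> approx i.
have near_le (a b : R) : `|b| <= `|a| + `|a - b|.
  by have := ler_normD a (b - a); rewrite addrC subrK distrC.
split; apply/ler_addgt0Pr => e /approx[v /(_ i)[Re_v Im_v] v_near];
  have [Re_near Im_near] := entry_le_cnorm (v - p) i; rewrite !mxE !ReImE in Re_near Im_near.
- by have := near_le (Re (v i 0)) (Re (p i 0)); lra.
- by have := near_le (Im (v i 0)) (Im (p i 0)); lra.
Qed.

Lemma rdot_ge0_closed n (a b : 'cV[C]_n) :
  (forall e, 0 < e -> exists a' b',
     [/\ cnorm (a' - a) <= e, cnorm (b' - b) <= e & 0 <= rdot a' b']) ->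
  0 <= rdot a b.
Proof.
move=> approx; apply: (@ge0_of_ge_small _ _ (1 + cnorm a + cnorm b)).
  by rewrite !addr_ge0 ?cnorm_ge0.
move=> e /andP[e_gt0 e_le1]; have [a' [b' [a_near b_near ab'_ge0]]] := approx e e_gt0.
have -> : rdot a b = rdot a' b' - rdot (a' - a) (b' - b) - rdot (a' - a) b - rdot a (b' - b).
  by rewrite !rdotBl !rdotBr; ring.
have := rdot_le (a' - a) (b' - b); have := rdot_le (a' - a) b; have := rdot_le a (b' - b).
have := cnorm_ge0 (a' - a); have := cnorm_ge0 (b' - b).
have := cnorm_ge0 a; have := cnorm_ge0 b.
nra.
Qed.

End EuclideanNorm.

Section SpectralNorm.
Variable R : realType.
Local Notation C := R[i].
Variables (m n : nat) (M : 'M[C]_(m, n)).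

Lemma mulmx_cnorm2_bounded :
  exists2 K, 0 <= K & forall v, cnorm2 (M *m v) <= K * cnorm2 v.
Proof.
pose row_re i : 'cV[C]_n := \col_j (M i j)^*.
pose row_im i : 'cV[C]_n := \col_j Complex (Im (M i j)) (Re (M i j)).
exists (\sum_i (cnorm2 (row_re i) + cnorm2 (row_im i))).
  by apply: sumr_ge0 => i _; rewrite addr_ge0 ?cnorm2_ge0.
move=> v; rewrite {1}/cnorm2 mulr_suml; apply: ler_sum => i _.
have -> : Re ((M *m v) i 0) = rdot (row_re i) v.
  by rewrite mxE Re_sum; apply: eq_bigr => j _; rewrite !mxE !ReImE; ring.
have -> : Im ((M *m v) i 0) = rdot (row_im i) v.
  by rewrite mxE Im_sum; apply: eq_bigr => j _; rewrite !mxE ImM /=; ring.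
by rewrite mulrDl; apply: lerD; apply: rdot_sqr_le.
Qed.

Lemma specnorm_has_ubound : has_ubound [set r : R | exists v : 'cV[C]_n,
  cnorm2 v <= 1 /\ r = Num.sqrt (cnorm2 (M *m v))].
Proof.
have [K K_ge0 M_le] := mulmx_cnorm2_bounded.
exists (Num.sqrt K) => _ [v [v_le1 ->]]; rewrite ler_sqrt //.
by apply: le_trans (M_le v) _; rewrite ler_piMr.
Qed.

Lemma cnorm_mulmx_unit v : cnorm2 v <= 1 -> cnorm (M *m v) <= specnorm M.
Proof. by move=> v_le1; apply: (ub_le_sup specnorm_has_ubound); exists v. Qed.

Lemma specnorm_ge0 : 0 <= specnorm M.
Proof.
apply: le_trans (cnorm_ge0 (M *m 0)) (cnorm_mulmx_unit _).
by rewrite /cnorm2 big1 // => i _; rewrite mxE expr0n addr0.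
Qed.

Lemma cnorm_mulmx_le v : cnorm (M *m v) <= specnorm M * cnorm v.
Proof.
have [v0|v_neq0] := eqVneq (cnorm v) 0.
  have [K _ M_le] := mulmx_cnorm2_bounded.
  rewrite v0 mulr0; apply: cnorm_le => //; apply: le_trans (M_le v) _.
  by rewrite -sqr_cnorm v0 !expr0n /= mulr0.
have v_gt0 : 0 < cnorm v by rewrite lt_neqAle eq_sym v_neq0 cnorm_ge0.
have unit_v : cnorm2 ((cnorm v)^-1%:C *: v) <= 1.
  by rewrite cnorm2Z -sqr_cnorm exprVn mulVf // expf_neq0.
have := cnorm_mulmx_unit unit_v.
rewrite -scalemxAr cnormZ ger0_norm ?invr_ge0 ?cnorm_ge0 // => M_le.
by rewrite mulrC -ler_pdivrMl // mulrC.
Qed.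

End SpectralNorm.

Section Prox.
Variable R : realType.
Local Notation C := R[i].
Variables (tau delta l : R).
Hypotheses (tau_delta_lt1 : tau * delta < 1) (l_ge0 : 0 <= l).

Lemma prox_scalar_opt (z y : R) : `|y| <= l ->
  let p := sgn z * Num.min ((1 - tau * delta)^-1 * `|z|) l in
  0 <= ((1 - tau * delta) * p - z) * (y - p).
Proof.
rewrite ler_norml => /andP[y_ge y_le] /=; set c := 1 - tau * delta.
have c_gt0 : 0 < c by rewrite subr_gt0.
have cK a : c * (c^-1 * a) = a by rewrite mulrA divff ?mul1r // gt_eqF.
rewrite /sgn; case: (leP 0 z) => [z_ge0|z_lt0].
  rewrite (ger0_norm z_ge0) mul1r; have [_|lt_l] := leP (c^-1 * z) l.
    by rewrite cK subrr mul0r.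
  by move: lt_l; rewrite -(ltr_pM2l c_gt0) cK; nra.
rewrite (ltr0_norm z_lt0); have [_|lt_l] := leP (c^-1 * - z) l.
  by rewrite mulN1r mulrN cK opprK subrr mul0r.
by move: lt_l; rewrite -(ltr_pM2l c_gt0) cK; nra.
Qed.

Lemma prox_inbox n (z : 'cV[C]_n) : inbox l (prox tau delta l z).
Proof.
have c_gt0 : 0 < 1 - tau * delta by rewrite subr_gt0.
move=> i; rewrite !mxE /=.
suff clip_le a : `|sgn a * Num.min ((1 - tau * delta)^-1 * `|a|) l| <= l by [].
have min_ge0 : 0 <= Num.min ((1 - tau * delta)^-1 * `|a|) l.
  by rewrite le_min l_ge0 andbT mulr_ge0 // invr_ge0 ltW.
rewrite normrM (ger0_norm min_ge0) /sgn.
by case: ifP => _; rewrite ?normrN normr1 mul1r ge_min lexx orbT.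
Qed.

Lemma prox_variational n (z y : 'cV[C]_n) : inbox l y ->
  0 <= rdot ((1 - tau * delta)%:C *: prox tau delta l z - z) (y - prox tau delta l z).
Proof.
move=> y_box; apply: sumr_ge0 => i _; rewrite !mxE !ReImE /= !mul0r subr0 addr0.
have [Re_y Im_y] := y_box i.
by apply: addr_ge0; apply: prox_scalar_opt.
Qed.

End Prox.

Section Descent.
Variable R : realType.
Local Notation C := R[i].
Variables (m n : nat) (A : 'M[C]_(m, n)) (tau delta l : R).
Local Notation M := (adjmx A *m A).
Local Notation S := (specnorm (adjmx A *m A)).

Definition fobj (v : 'cV[C]_n) : R := cnorm2 (A *m v) / 2 - delta / 2 * cnorm2 v.

Definition c2po_step (v : 'cV[C]_n) : 'cV[C]_n :=
  prox tau delta l (v - tau%:C *: (M *m v)).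

Lemma objF_inbox v : inbox l v -> objF A delta l v = (fobj v)%:E.
Proof. by move=> v_box; rewrite /objF asboolT. Qed.

Lemma fobj_ge v : inbox l v -> - (`|delta| * (n%:R * l ^+ 2)) <= fobj v.
Proof.
move=> /inbox_cnorm2_le v_le; rewrite /fobj.
have := cnorm2_ge0 (A *m v); have := cnorm2_ge0 v.
have := normr_ge0 delta; have := ler_norm delta.
nra.
Qed.

Lemma rdot_mulmx_adj u v : rdot (A *m u) (A *m v) = rdot (M *m u) v.
Proof. by rewrite rdotC rdot_adjmx mulmxA rdotC. Qed.

Lemma fobjD x d : fobj (x + d) =
  fobj x + rdot (M *m x - delta%:C *: x) d + (cnorm2 (A *m d) - delta * cnorm2 d) / 2.
Proof.
rewrite /fobj mulmxDr !cnorm2D rdot_mulmx_adj rdotBl rdotZl.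
by field.
Qed.

Lemma cnorm2_mulmx_le d : cnorm2 (A *m d) <= S * cnorm2 d.
Proof.
rewrite -rdotvv rdot_mulmx_adj rdotC; apply: le_trans (rdot_le _ _) _.
rewrite -sqr_cnorm expr2 mulrCA ler_wpM2l ?cnorm_ge0 //.
exact: cnorm_mulmx_le.
Qed.

Lemma c2po_residualE (u u' : 'cV[C]_n) :
  (1 - tau * delta)%:C *: u' - (u - tau%:C *: (M *m u)) =
  tau%:C *: (M *m u - delta%:C *: u) + (1 - tau * delta)%:C *: (u' - u).
Proof. by apply/matrixP => i j; rewrite !mxE rmorphB rmorphM rmorph1; ring. Qed.

Lemma c2po_descent x : 0 < tau -> tau * delta < 1 -> inbox l x ->
  (1 - tau * S) * cnorm2 (c2po_step x - x) <= 2 * tau * (fobj x - fobj (c2po_step x)).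
Proof.
move=> tau_gt0 tau_delta_lt1 x_box.
have := prox_variational tau_delta_lt1 (x - tau%:C *: (M *m x)) x_box.
rewrite -/(c2po_step x); set d := c2po_step x - x.
have -> : c2po_step x = x + d by rewrite addrC subrK.
have -> : x - (x + d) = - d by rewrite opprD addrA subrr add0r.
rewrite c2po_residualE [x + d - x]addrC addKr rdotNr rdotDl !rdotZl rdotvv fobjD.
have := ler_wpM2l (ltW tau_gt0) (cnorm2_mulmx_le d).
have := cnorm2_ge0 d.
nra.
Qed.

Lemma c2po_residual_lipschitz c (u u' p : 'cV[C]_n) : 0 <= c -> 0 <= tau ->
  cnorm (c%:C *: u' - (u - tau%:C *: (M *m u)) - (c%:C *: p - (p - tau%:C *: (M *m p))))
    <= c * cnorm (u' - p) + (1 + tau * S) * cnorm (u - p).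
Proof.
move=> c_ge0 tau_ge0.
have -> : c%:C *: u' - (u - tau%:C *: (M *m u)) - (c%:C *: p - (p - tau%:C *: (M *m p)))
    = c%:C *: (u' - p) - ((u - p) - tau%:C *: (M *m (u - p))).
  by rewrite mulmxBr; apply/matrixP => i j; rewrite !mxE; ring.
apply: le_trans (cnormB _ _) _; rewrite cnormZ ger0_norm // lerD2l.
apply: le_trans (cnormB _ _) _; rewrite cnormZ ger0_norm // mulrDl mul1r lerD2l -mulrA.
by rewrite ler_wpM2l // cnorm_mulmx_le.
Qed.

End Descent.

Section C2POIterates.
Variable R : realType.
Local Notation C := R[i].
Variables (m n : nat) (A : 'M[C]_(m, n)) (tau delta l : R) (x : nat -> 'cV[C]_n).
Local Notation M := (adjmx A *m A).
Local Notation S := (specnorm (adjmx A *m A)).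
Hypotheses (tau_gt0 : 0 < tau) (tau_delta_lt1 : tau * delta < 1) (tau_S_lt1 : tau * S < 1).
Hypotheses (l_ge0 : 0 <= l) (x_next : forall t, x t.+1 = c2po_step A tau delta l (x t)).

Lemma c2po_inbox t : inbox l (x t.+1).
Proof. by rewrite x_next; apply: prox_inbox. Qed.

Lemma c2po_descent_iter t : inbox l (x t) ->
  (1 - tau * S) * cnorm2 (x t.+1 - x t)
    <= 2 * tau * (fobj A delta (x t) - fobj A delta (x t.+1)).
Proof. by rewrite x_next; apply: c2po_descent. Qed.

Lemma objF_c2po_le t : (objF A delta l (x t.+1) <= objF A delta l (x t))%E.
Proof.
have [x_box|x_out] := pselect (inbox l (x t)); last by rewrite /objF (asboolF x_out) leey.
rewrite !objF_inbox //; last exact: c2po_inbox.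
rewrite lee_fin -subr_ge0 -(pmulr_rge0 _ (_ : 0 < 2 * tau)) ?mulr_gt0 //.
apply: le_trans (c2po_descent_iter x_box).
by rewrite mulr_ge0 ?cnorm2_ge0 // subr_ge0 ltW.
Qed.

Lemma c2po_steps_vanish e : 0 < e ->
  exists N, forall t, (N <= t)%N -> cnorm2 (x t.+2 - x t.+1) < e.
Proof.
apply: (@sufficient_decrease_eventually_lt _ (fun t => 2 * tau * fobj A delta (x t.+1))
  _ (1 - tau * S) (2 * tau * - (`|delta| * (n%:R * l ^+ 2)))) => [|t|t|t].
- by rewrite subr_gt0.
- exact: cnorm2_ge0.
- by rewrite -mulrBr; apply: c2po_descent_iter; apply: c2po_inbox.
- by apply: ler_wpM2l; [rewrite mulr_ge0 // ltW | apply: fobj_ge; apply: c2po_inbox].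
Qed.

Lemma limit_point_near p : limit_point x p ->
  forall e, 0 < e -> exists t, cnorm (x t.+1 - p) <= e /\ cnorm (x t.+2 - p) <= e.
Proof.
move=> p_lim e e_gt0; have e2_ge0 : 0 <= e / 2 by rewrite divr_ge0 // ltW.
have e2_gt0 : 0 < (e / 2) ^+ 2 by rewrite exprn_gt0 // divr_gt0.
have [N small_step] := c2po_steps_vanish e2_gt0.
have [[|t] [N_lt near]] := p_lim _ e2_gt0 N.+1; first by [].
have near_t := cnorm_le e2_ge0 (ltW near).
have step_t := cnorm_le e2_ge0 (ltW (small_step t N_lt)).
exists t; split; first lra.
have -> : x t.+2 - p = (x t.+2 - x t.+1) + (x t.+1 - p) by rewrite addrA subrK.
by have := cnormD (x t.+2 - x t.+1) (x t.+1 - p); lra.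
Qed.

Lemma limit_point_inbox p : limit_point x p -> inbox l p.
Proof.
move=> p_lim; apply: inbox_closed => e /(limit_point_near p_lim)[t [near _]].
by exists (x t.+1); first exact: c2po_inbox.
Qed.

Lemma limit_point_stationary p : limit_point x p -> stationary A delta l p.
Proof.
move=> p_lim; split; first exact: limit_point_inbox.
move=> y y_box; set c := 1 - tau * delta.
have c_gt0 : 0 < c by rewrite subr_gt0.
have tauS_ge0 : 0 <= tau * S by rewrite mulr_ge0 ?specnorm_ge0 // ltW.
suff : 0 <= rdot (c%:C *: p - (p - tau%:C *: (M *m p))) (y - p).
  by rewrite c2po_residualE subrr scaler0 addr0 rdotZl pmulr_rge0 // rdotNl oppr_le0.
apply: rdot_ge0_closed => e e_gt0; have K_gt0 : 0 < c + (1 + tau * S) by lra.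
set eps := e / (c + (1 + tau * S)).
have eps_gt0 : 0 < eps by rewrite divr_gt0.
have eps_K : eps * c + eps * (1 + tau * S) = e by rewrite -mulrDr divfK ?gt_eqF.
have [t [near1 near2]] := limit_point_near p_lim eps_gt0.
exists (c%:C *: x t.+2 - (x t.+1 - tau%:C *: (M *m x t.+1))), (y - x t.+2); split.
- have := c2po_residual_lipschitz A (x t.+1) (x t.+2) p (ltW c_gt0) (ltW tau_gt0).
  have := ler_wpM2l (ltW c_gt0) near2.
  have := ler_wpM2l (_ : 0 <= 1 + tau * S) near1; rewrite addr_ge0 // => /(_ isT).
  lra.
- rewrite opprB addrC addrA subrK cnormBC.
  by have := mulr_ge0 (ltW eps_gt0) (ltW c_gt0); have := mulr_ge0 (ltW eps_gt0) tauS_ge0; nra.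
- by rewrite x_next; apply: prox_variational.
Qed.

End C2POIterates.

Unset Implicit Arguments. Set Strict Implicit.

(* x 0 is x^(1) of the paper; x (t.+1) is x^(t+2). *)
Theorem theorem2 (R : realType) (U B : nat) (P delta tau : R)
  (H : 'M[R[i]]_(U, B)) (s : 'cV[R[i]]_U)
  (x : nat -> 'cV[R[i]]_B) :
  (0 < U)%N -> (U <= B)%N -> 0 < P -> s != 0 ->
  let Q : 'M[R[i]]_U := 1%:M - ((cnorm2 s)^-1)%:C *: (s *m adjmx s) in
  let A : 'M[R[i]]_(U, B) := Q *m H in
  let l : R := Num.sqrt (P / (2 * B%:R)) in
  0 < delta -> 0 < tau ->
  tau * specnorm (adjmx A *m A) < 1 -> tau * delta < 1 ->
  x 0%N = adjmx H *m s ->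
  (forall t : nat,
     x t.+1 = prox tau delta l (x t - tau%:C *: (adjmx A *m A *m x t))) ->
  (forall t : nat, (objF A delta l (x t.+1) <= objF A delta l (x t))%E) /\
  (forall p : 'cV[R[i]]_B, limit_point x p -> stationary A delta l p).
Proof.
move=> _ _ _ _ Q A l _ tau_gt0 tau_S_lt1 tau_delta_lt1 _ x_next.
have l_ge0 : 0 <= l by apply: sqrtr_ge0.
split=> [t | p].
- exact: (objF_c2po_le tau_gt0 tau_delta_lt1 tau_S_lt1 l_ge0 x_next).
- exact: (limit_point_stationary tau_gt0 tau_delta_lt1 tau_S_lt1 l_ge0 x_next).
Qed.
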